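(* Let $\mathbb X$ be a separable reflexive Banach space, let $x_1,\ldots,x_k\in\mathbb X$, and let $\hat x_\ast$ be any minimizer of $y\mapsto\sum_{j=1}^k\|y-x_j\|$ over $y\in\mathrm{co}(x_1,\ldots,x_k)$, the convex hull of $\{x_1,\ldots,x_k\}$. Fix $\alpha\in(0,\tfrac12)$ and $r>0$, and set $C_\alpha=\frac{2(1-\alpha)}{1-2\alpha}$. If $z\in\mathrm{co}(x_1,\ldots,x_k)$ satisfies $\|\hat x_\ast-z\|>C_\alpha r$, then there exists $J\subseteq\{1,\ldots,k\}$ with $|J|>\alpha k$ such that $\|x_j-z\|>r$ for all $j\in J$. *)

From Stdlib Require Import Reals List.
Open Scope R_scope.

Record NormedSpace (X : Type) := {
  vzero : X;
  vadd : X -> X -> X;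
  vopp : X -> X;
  vscal : R -> X -> X;
  vnorm : X -> R;
  vadd_assoc : forall x y z, vadd x (vadd y z) = vadd (vadd x y) z;
  vadd_comm : forall x y, vadd x y = vadd y x;
  vadd_0 : forall x, vadd x vzero = x;
  vadd_opp : forall x, vadd x (vopp x) = vzero;
  vscal_1 : forall x, vscal 1 x = x;
  vscal_assoc : forall a b x, vscal a (vscal b x) = vscal (a * b) x;
  vscal_distr_v : forall a x y, vscal a (vadd x y) = vadd (vscal a x) (vscal a y);
  vscal_distr_s : forall a b x, vscal (a + b) x = vadd (vscal a x) (vscal b x);
  vnorm_eq0 : forall x, vnorm x = 0 -> x = vzero;
  vnorm_scal : forall a x, vnorm (vscal a x) = Rabs a * vnorm x;
  vnorm_triangle : forall x y, vnorm (vadd x y) <= vnorm x + vnorm y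
}.

Arguments vzero {X} _.
Arguments vadd {X} _ _ _.
Arguments vopp {X} _ _.
Arguments vscal {X} _ _ _.
Arguments vnorm {X} _ _.

Section Defs.
Context {X : Type} (N : NormedSpace X).

Definition vsub (x y : X) : X := vadd N x (vopp N y).
Definition dist (x y : X) : R := vnorm N (vsub x y).

Definition complete : Prop :=
  forall u : nat -> X,
    (forall eps, 0 < eps -> exists M, forall m n, (M <= m)%nat -> (M <= n)%nat ->
        dist (u m) (u n) < eps) ->
    exists l, forall eps, 0 < eps -> exists M, forall n, (M <= n)%nat -> dist (u n) l < eps.

Definition separable : Prop :=
  exists d : nat -> X, forall x eps, 0 < eps -> exists n, dist x (d n) < eps.

Definition is_dual (f : X -> R) : Prop :=
  (forall x y, f (vadd N x y) = f x + f y) /\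
  (forall a x, f (vscal N a x) = a * f x) /\
  (exists c, 0 <= c /\ forall x, Rabs (f x) <= c * vnorm N x).

(* Elements of the bidual: linear functionals on the dual that are bounded
   w.r.t. the dual (operator) norm; a functional f is bounded by c in the dual
   norm iff |f x| <= c ||x|| for all x. *)
Definition is_bidual (Phi : (X -> R) -> R) : Prop :=
  (forall f g, is_dual f -> is_dual g -> Phi (fun x => f x + g x) = Phi f + Phi g) /\
  (forall a f, is_dual f -> Phi (fun x => a * f x) = a * Phi f) /\
  (exists M, 0 <= M /\ forall f c, is_dual f -> 0 <= c ->
       (forall x, Rabs (f x) <= c * vnorm N x) -> Rabs (Phi f) <= M * c).

Definition reflexive : Prop :=
  forall Phi, is_bidual Phi -> exists x, forall f, is_dual f -> Phi f = f x.

Fixpoint vsum (f : nat -> X) (n : nat) : X :=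
  match n with O => vzero N | S m => vadd N (vsum f m) (f m) end.

Fixpoint rsum (f : nat -> R) (n : nat) : R :=
  match n with O => 0 | S m => rsum f m + f m end.

Definition in_conv_hull (x : nat -> X) (k : nat) (y : X) : Prop :=
  exists lam : nat -> R,
    (forall j, (j < k)%nat -> 0 <= lam j) /\
    rsum lam k = 1 /\
    y = vsum (fun j => vscal N (lam j) (x j)) k.

Definition sum_dist (x : nat -> X) (k : nat) (y : X) : R :=
  rsum (fun j => vnorm N (vsub y (x j))) k.

End Defs.

From Stdlib Require Import Reals List Lra Lia.
Open Scope R_scope.

(* Write d = ||x^ - z|| and call an index j "far" when
   ||x_j - z|| > r.  By the triangle inequality every index satisfies
   ||x^ - x_j|| - ||z - x_j|| >= -d, and a near index even satisfies
   ||x^ - x_j|| - ||z - x_j|| >= d - 2r.  Summing over the m far and k - m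
   near indices gives
        S(x^) - S(z) >= (k - 2m) d - 2 (k - m) r,
   where S is the sum of distances.  Since z lies in the hull and x^
   minimizes S there, the left side is <= 0.  If we had m <= alpha k, then
   k - 2m > 0 and this inequality would force d <= C_alpha r, contradicting
   the hypothesis; hence the set of far indices is the required J. *)

Section NormedSpaceFacts.
Context {X : Type} (N : NormedSpace X).

Lemma scal_zero (x : X) : vscal N 0 x = vzero N.
Proof.
  assert (Hdouble : vscal N 0 x = vadd N (vscal N 0 x) (vscal N 0 x)).
  { rewrite <- vscal_distr_s. f_equal. ring. }
  set (s := vscal N 0 x) in *.
  transitivity (vadd N (vadd N s s) (vopp N s)).
  - rewrite <- vadd_assoc, vadd_opp, vadd_0. reflexivity.
  - rewrite <- Hdouble. apply vadd_opp.
Qed.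

Lemma opp_is_scal (x : X) : vopp N x = vscal N (-1) x.
Proof.
  assert (Hsum : vadd N (vscal N (-1) x) x = vzero N).
  { rewrite <- (vscal_1 _ N x) at 2. rewrite <- vscal_distr_s.
    replace (-1 + 1) with 0 by ring. apply scal_zero. }
  rewrite <- (vadd_0 _ N (vscal N (-1) x)), <- (vadd_opp _ N x), vadd_assoc, Hsum.
  rewrite vadd_comm, vadd_0. reflexivity.
Qed.

Lemma dist_sym (x y : X) : vnorm N (vsub N x y) = vnorm N (vsub N y x).
Proof.
  assert (Hswap : vsub N y x = vscal N (-1) (vsub N x y)).
  { unfold vsub. rewrite !opp_is_scal, vscal_distr_v, vscal_assoc, vadd_comm.
    f_equal. replace (-1 * -1) with 1 by ring. symmetry. apply vscal_1. }
  rewrite Hswap, vnorm_scal, Rabs_left by lra. ring.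
Qed.

Lemma dist_triangle (x w y : X) :
  vnorm N (vsub N x y) <= vnorm N (vsub N x w) + vnorm N (vsub N w y).
Proof.
  replace (vsub N x y) with (vadd N (vsub N x w) (vsub N w y)).
  - apply vnorm_triangle.
  - unfold vsub. rewrite vadd_assoc. f_equal.
    rewrite <- (vadd_assoc _ N x), (vadd_comm _ N (vopp N w)), vadd_opp, vadd_0.
    reflexivity.
Qed.

Lemma dist_gap_lower (a b w : X) :
  vnorm N (vsub N a w) - vnorm N (vsub N b w) >= - vnorm N (vsub N a b) /\
  vnorm N (vsub N a w) - vnorm N (vsub N b w)
    >= vnorm N (vsub N a b) - 2 * vnorm N (vsub N b w).
Proof.
  assert (Hbw := dist_triangle b a w).
  assert (Hab := dist_triangle a w b).
  rewrite (dist_sym w b) in Hab. rewrite (dist_sym b a) in Hbw.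
  split; lra.
Qed.

Lemma conv_hull_index_pos (x : nat -> X) (k : nat) (y : X) :
  in_conv_hull N x k y -> (0 < k)%nat.
Proof.
  intros [lam [_ [Hsum _]]]. destruct k; [simpl in Hsum; lra | lia].
Qed.

End NormedSpaceFacts.

Section FarIndices.
Context {X : Type} (N : NormedSpace X) (x : nat -> X) (z : X) (r : R).

Definition is_far (j : nat) : bool :=
  if Rlt_dec r (vnorm N (vsub N (x j) z)) then true else false.

Definition far_indices (n : nat) : list nat := filter is_far (seq 0 n).

Lemma far_indices_spec (n j : nat) :
  In j (far_indices n) <-> (j < n)%nat /\ vnorm N (vsub N (x j) z) > r.
Proof.
  unfold far_indices, is_far. rewrite filter_In, in_seq.
  destruct (Rlt_dec r _); split; intros [H1 H2]; split; try lia; try lra; easy.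
Qed.

Lemma sum_dist_gap_lower (a : X) (n : nat) :
  let m := INR (length (far_indices n)) in
  sum_dist N x n a - sum_dist N x n z
    >= (INR n - 2 * m) * vnorm N (vsub N a z) - 2 * (INR n - m) * r.
Proof.
  induction n as [|n IH]; cbv zeta in *.
  - unfold sum_dist, far_indices. simpl. lra.
  - unfold sum_dist, far_indices in *. simpl rsum.
    rewrite seq_S, filter_app, length_app, plus_INR, S_INR.
    destruct (dist_gap_lower N a z (x n)) as [Hfar Hnear].
    assert (Hsym := dist_sym N z (x n)).
    simpl filter. destruct (is_far n) eqn:Hfar_n; simpl length; simpl INR;
      unfold is_far in Hfar_n; destruct (Rlt_dec _ _); try discriminate; lra.
Qed.

End FarIndices.

(* Real arithmetic: if (K - 2M) d <= 2 (K - M) r with M <= alpha K, then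
   d <= C_alpha r, because (K - 2M) / (K - M) >= (1 - 2 alpha) / (1 - alpha). *)
Lemma ratio_bound (K M d r alpha : R) :
  0 < K -> 0 < alpha < 1/2 -> 0 < r -> M <= alpha * K ->
  (K - 2 * M) * d <= 2 * (K - M) * r ->
  d <= 2 * (1 - alpha) / (1 - 2 * alpha) * r.
Proof.
  intros HK Halpha Hr HM Hineq.
  assert (Hpos : 0 < K - 2 * M) by nra.
  assert (Hscaled : (K - 2 * M) * ((1 - 2 * alpha) * d)
                    <= (K - 2 * M) * (2 * (1 - alpha) * r)) by nra.
  apply Rmult_le_reg_l in Hscaled; [|exact Hpos].
  apply (Rmult_le_reg_l (1 - 2 * alpha)); [lra |].
  replace ((1 - 2 * alpha) * (2 * (1 - alpha) / (1 - 2 * alpha) * r))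
    with (2 * (1 - alpha) * r) by (field; lra).
  lra.
Qed.

Theorem mainTheorem3 (X : Type) (N : NormedSpace X)
  (Hcomplete : complete N) (Hsep : separable N) (Hrefl : reflexive N)
  (k : nat) (x : nat -> X) (xhat : X)
  (Hxhat_co : in_conv_hull N x k xhat)
  (Hxhat_min : forall y, in_conv_hull N x k y -> sum_dist N x k xhat <= sum_dist N x k y)
  (alpha r : R) (Halpha : 0 < alpha < 1/2) (Hr : 0 < r)
  (z : X) (Hz_co : in_conv_hull N x k z)
  (Hfar : vnorm N (vsub N xhat z) > (2 * (1 - alpha) / (1 - 2 * alpha)) * r) :
  exists J : list nat,
    NoDup J /\ (forall j, In j J -> (j < k)%nat) /\
    INR (length J) > alpha * INR k /\
    (forall j, In j J -> vnorm N (vsub N (x j) z) > r).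
Proof.
  exists (far_indices N x z r k).
  split; [apply NoDup_filter, seq_NoDup |].
  split; [intros j Hj; apply far_indices_spec in Hj; tauto |].
  split; [| intros j Hj; apply far_indices_spec in Hj; tauto].
  apply Rnot_le_lt. intros Hfew.
  assert (Hk : 0 < INR k) by (apply lt_0_INR, (conv_hull_index_pos N x k z Hz_co)).
  assert (Hgap := sum_dist_gap_lower N x z r xhat k).
  assert (Hmin := Hxhat_min z Hz_co).
  assert (Hbound := ratio_bound (INR k) (INR (length (far_indices N x z r k)))
                      (vnorm N (vsub N xhat z)) r alpha Hk Halpha Hr Hfew).
  simpl in Hgap. lra.
Qed.
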